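(* Let $M$ be a quasi-permutation matrix. The permutations that are minimal (for the pattern order) among permutations containing $M$ as a submatrix are exactly the permutations whose matrices can be obtained from $M$ by inserting rows, each containing exactly one entry $1$, this entry lying in a column of $M$ consisting only of $0$'s, and inserting columns, each containing exactly one entry $1$, this entry lying in a row of $M$ consisting only of $0$'s.
   Context: A quasi-permutation matrix is a binary matrix with at most one entry $1$ in each row and in each column. A permutation $\sigma$ of $\{1,\dots,n\}$ is identified with its permutation matrix $M_\sigma$ ($M_\sigma(i,j)=1$ iff $i=\sigma(j)$, rows numbered bottom to top). A matrix $M$ is a submatrix of $N$ if $M$ is obtained from $N$ by deleting some rows and/or columns; the pattern order on permutations is the submatrix order restricted to permutation matrices. *)

From mathcomp Require Import all_boot all_order all_algebra all_fingroup.
Set Implicit Arguments. Unset Strict Implicit. Unset Printing Implicit Defensive.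

Definition incr {m p : nat} (f : 'I_m -> 'I_p) : Prop :=
  forall i j : 'I_m, i < j -> f i < f j.

Definition quasi_perm {m n : nat} (M : 'M[bool]_(m, n)) : Prop :=
  (forall i j j', M i j -> M i j' -> j = j') /\
  (forall i i' j, M i j -> M i' j -> i = i').

Definition is_submatrix {m n p q : nat}
    (M : 'M[bool]_(m, n)) (N : 'M[bool]_(p, q)) : Prop :=
  exists (f : 'I_m -> 'I_p) (g : 'I_n -> 'I_q),
    incr f /\ incr g /\ forall i j, N (f i) (g j) = M i j.

Definition permmx {n : nat} (s : 'S_n) : 'M[bool]_n :=
  \matrix_(i, j) (i == s j).

Definition pattern_le {k n : nat} (s : 'S_k) (t : 'S_n) : Prop :=
  is_submatrix (permmx s) (permmx t).

Definition minimal_containing {m n p : nat} (M : 'M[bool]_(m, n)) (t : 'S_p)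
    : Prop :=
  is_submatrix M (permmx t) /\
  forall (k : nat) (s : 'S_k),
    is_submatrix M (permmx s) -> pattern_le s t -> pattern_le t s.

Definition obtained_by_insertion {m n p q : nat}
    (M : 'M[bool]_(m, n)) (N : 'M[bool]_(p, q)) : Prop :=
  exists (f : 'I_m -> 'I_p) (g : 'I_n -> 'I_q),
    [/\ incr f, incr g,
     (forall i j, N (f i) (g j) = M i j),
     (forall r : 'I_p, ~ (exists i, f i = r) ->
        exists j : 'I_n, (forall i, M i j = false) /\
                         (forall c : 'I_q, N r c = (c == g j))) &
     (forall c : 'I_q, ~ (exists j, g j = c) ->
        exists i : 'I_m, (forall j, M i j = false) /\
                         (forall r : 'I_p, N r c = (r == f i)))].

From mathcomp Require Import all_boot all_order all_algebra all_fingroup.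
Set Implicit Arguments. Unset Strict Implicit. Unset Printing Implicit Defensive.

(* If [t] is minimal, every point (t c, c) of [t] shares its row or its column
   with a fixed copy of [M] in [t]: otherwise deleting that point leaves a
   smaller permutation that still contains [M] and lies below [t]. Applied to
   the rows and columns missed by the copy, this is exactly the insertion
   description. Conversely, if [t] is obtained by insertion and [s] <= [t]
   contains [M], the rows of [t] map injectively into those of [s] (original
   rows through the copy of [M] in [s], inserted rows through the zero column
   of [M] holding their 1), so [s] and [t] have the same size; an increasing
   self-map of 'I_p is the identity, hence [s] = [t]. *)


Lemma incr_inj m p (f : 'I_m -> 'I_p) : incr f -> injective f.
Proof.
move=> incr_f i j eq_fij; apply: val_inj.
by case: (ltngtP i j) => // [/incr_f | /incr_f]; rewrite eq_fij ltnn.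
Qed.

Lemma incr_leq m p (f : 'I_m -> 'I_p) : incr f -> m <= p.
Proof. by move=> /incr_inj/leq_card; rewrite !card_ord. Qed.

Lemma incr_geq m p (f : 'I_m -> 'I_p) : incr f -> forall i : 'I_m, i <= f i.
Proof.
move=> incr_f [i lt_im] /=; elim: i lt_im => [//|i IHi] lt_im.
have lt_i_m := ltnW lt_im.
exact: leq_ltn_trans (IHi lt_i_m) (incr_f (Ordinal lt_i_m) (Ordinal lt_im) _).
Qed.

Lemma incr_rev m p (f : 'I_m -> 'I_p) :
  incr f -> incr (fun i => rev_ord (f (rev_ord i))).
Proof.
move=> incr_f i j lt_ij; rewrite /= ltn_sub2lE // ltnS.
by apply: incr_f; rewrite /= ltn_sub2lE // ltnS.
Qed.

Lemma incr_id p (f : 'I_p -> 'I_p) : incr f -> f =1 id.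
Proof.
move=> incr_f i; apply/val_inj/eqP; rewrite eqn_leq (incr_geq incr_f) andbT.
have := incr_geq (incr_rev incr_f) (rev_ord i).
by rewrite /= rev_ordK leq_sub2lE // ltnS.
Qed.

Lemma ltn_lift2 n (h : 'I_n) i j : (lift h i < lift h j) = (i < j).
Proof. by rewrite /= !ltnNge leq_bump2. Qed.

Lemma incr_lift n (h : 'I_n) : incr (lift h).
Proof. by move=> i j; rewrite ltn_lift2. Qed.

Lemma incr_factor_lift m n (f : 'I_m -> 'I_n) (h : 'I_n) :
  incr f -> (forall i, f i != h) -> exists2 f', incr f' & f =1 lift h \o f'.
Proof.
move=> incr_f f_neq_h.
have /fin_all_exists [f' def_f] : forall i, exists y : 'I_n.-1, lift h y = f i.
  move=> i; have : h != f i by rewrite eq_sym.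
  by case/unlift_some => y -> _; exists y.
exists f' => [i j /incr_f | i /=]; first by rewrite -!def_f ltn_lift2.
exact/esym/def_f.
Qed.

Lemma submatrix_leq_rows m n p q (M : 'M[bool]_(m, n)) (N : 'M[bool]_(p, q)) :
  is_submatrix M N -> m <= p.
Proof. by case=> f [g [/incr_leq]]. Qed.

Lemma submatrix_refl m n (M : 'M[bool]_(m, n)) : is_submatrix M M.
Proof. by exists id, id; do !split. Qed.

Lemma submatrix_same_size_eq m n (M N : 'M[bool]_(m, n)) :
  is_submatrix M N -> M = N.
Proof.
case=> f [g [/incr_id f_id [/incr_id g_id sub_MN]]].
by apply/matrixP => i j; rewrite -sub_MN f_id g_id.
Qed.

Lemma pattern_le_same_size_sym p (s t : 'S_p) :
  pattern_le s t -> pattern_le t s.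
Proof.
by rewrite /pattern_le => /submatrix_same_size_eq ->; apply: submatrix_refl.
Qed.

Lemma perm_delete_point p (t : 'S_p) (c : 'I_p) :
  exists s : 'S_p.-1, forall j, t (lift c j) = lift (t c) (s j).
Proof.
have /fin_all_exists [s def_s] :
    forall j, exists y : 'I_p.-1, t (lift c j) = lift (t c) y.
  move=> j; have : t c != t (lift c j) by rewrite (inj_eq perm_inj) neq_lift.
  by case/unlift_some => y -> _; exists y.
have s_inj : injective s.
  move=> j j' eq_s; apply/(@lift_inj _ c)/(@perm_inj _ t).
  by rewrite !def_s eq_s.
by exists (perm s_inj) => j; rewrite permE.
Qed.

Lemma submatrix_delete_point m n (M : 'M[bool]_(m, n)) p (t : 'S_p)
    (f : 'I_m -> 'I_p) (g : 'I_n -> 'I_p) (c : 'I_p) :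
  incr f -> incr g -> (forall i j, permmx t (f i) (g j) = M i j) ->
  (forall i, f i != t c) -> (forall j, g j != c) ->
  exists s : 'S_p.-1, is_submatrix M (permmx s) /\ pattern_le s t.
Proof.
move=> incr_f incr_g sub_M f_avoid g_avoid.
have [s def_s] := perm_delete_point t c.
have lift_sub i j : permmx t (lift (t c) i) (lift c j) = permmx s i j.
  by rewrite !mxE def_s (inj_eq (@lift_inj _ _)).
have [f' incr_f' def_f] := incr_factor_lift incr_f f_avoid.
have [g' incr_g' def_g] := incr_factor_lift incr_g g_avoid.
exists s; split.
- exists f', g'; do 2!split=> //.
  by move=> i j; rewrite -lift_sub -sub_M def_f def_g.
- by exists (lift (t c)), (lift c); split; [|split]; try exact: incr_lift.
Qed.

Lemma minimal_containing_point_covered m n (M : 'M[bool]_(m, n)) p (t : 'S_p)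
    (f : 'I_m -> 'I_p) (g : 'I_n -> 'I_p) :
  minimal_containing M t ->
  incr f -> incr g -> (forall i j, permmx t (f i) (g j) = M i j) ->
  forall c, (exists i, f i = t c) \/ (exists j, g j = c).
Proof.
move=> [_ t_min] incr_f incr_g sub_M c.
case: (pickP (fun i => f i == t c)) => [i /eqP fi_tc | f_avoid].
  by left; exists i.
case: (pickP (fun j => g j == c)) => [j /eqP gj_c | g_avoid].
  by right; exists j.
have [s [sub_Ms le_st]] := submatrix_delete_point incr_f incr_g sub_M
  (fun i => negbT (f_avoid i)) (fun j => negbT (g_avoid j)).
have := submatrix_leq_rows (t_min _ s sub_Ms le_st).
by rewrite leqNgt ltn_predL (leq_ltn_trans (leq0n c) (ltn_ord c)).
Qed.

Lemma minimal_containing_insertion m n (M : 'M[bool]_(m, n)) p (t : 'S_p) :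
  minimal_containing M t -> obtained_by_insertion M (permmx t).
Proof.
move=> t_min; have [f [g [incr_f [incr_g sub_M]]]] := t_min.1.
have M_E i j : M i j = (f i == t (g j)) by rewrite -sub_M mxE.
have covered := minimal_containing_point_covered t_min incr_f incr_g sub_M.
exists f, g; split=> // [r r_new | c c_new].
- have [[i] | [j gj_r]] := covered (t^-1 r)%g.
    by rewrite permKV => fi_r; case: r_new; exists i.
  exists j; split=> [i | c].
  + rewrite M_E gj_r permKV; apply/negbTE/eqP => fi_r.
    by apply: r_new; exists i.
  + by rewrite mxE gj_r -(inj_eq (@perm_inj _ t^-1)) permK eq_sym.
- have [[i fi_c] | [j gj_c]] := covered c; last by case: c_new; exists j.
  exists i; split=> [j | r]; last by rewrite mxE fi_c.
  rewrite M_E fi_c (inj_eq perm_inj); apply/negbTE/eqP => c_gj.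
  by apply: c_new; exists j.
Qed.

Lemma insertion_leq_rows m n (M : 'M[bool]_(m, n)) p (t : 'S_p) k (s : 'S_k) :
  obtained_by_insertion M (permmx t) -> is_submatrix M (permmx s) -> p <= k.
Proof.
move=> [f [g [incr_f incr_g sub_M row_new _]]] [F [G [incr_F [incr_G sub_Ms]]]].
have Ms_E i j : M i j = (F i == s (G j)) by rewrite -sub_Ms mxE.
(* An inserted row [r] carries its 1 in a zero column [j] of [M]; it is sent to
   the row of the 1 of [s] in column [G j], which no [F i] can reach. *)
have row_image r : exists x : 'I_k,
    (exists2 i, f i = r & x = F i) \/
    (exists j, [/\ forall i, M i j = false, t (g j) = r & x = s (G j)]).
  case: (pickP (fun i => f i == r)) => [i /eqP fi_r | r_new].
    by exists (F i); left; exists i.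
  have [|j [zero_j row_r]] := row_new r; first by case=> i /eqP; rewrite r_new.
  exists (s (G j)); right; exists j; split=> //.
  by have := row_r (g j); rewrite mxE eqxx => /eqP.
have /fin_all_exists [phi phiP] := row_image.
suff /leq_card : injective phi by rewrite !card_ord.
move=> r1 r2.
case: (phiP r1) => [[i1 <- phi1] | [j1 [zero1 <- phi1]]];
case: (phiP r2) => [[i2 <- phi2] | [j2 [zero2 <- phi2]]] eq_phi.
- by congr f; apply: (incr_inj incr_F); rewrite -phi1 -phi2.
- by have := zero2 i1; rewrite Ms_E -phi1 eq_phi phi2 eqxx.
- by have := zero1 i2; rewrite Ms_E -phi2 -eq_phi phi1 eqxx.
- congr (t (g _)); apply/(incr_inj incr_G)/(@perm_inj _ s).
  by rewrite -phi1 -phi2.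
Qed.

Lemma insertion_minimal_containing m n (M : 'M[bool]_(m, n)) p (t : 'S_p) :
  obtained_by_insertion M (permmx t) -> minimal_containing M t.
Proof.
move=> ins_Mt; have sub_Mt : is_submatrix M (permmx t).
  by case: ins_Mt => f [g [incr_f incr_g sub_M _ _]]; exists f, g.
split=> // k s sub_Ms le_st.
have eq_kp : k = p.
  apply/eqP; rewrite eqn_leq (submatrix_leq_rows le_st).
  exact: insertion_leq_rows ins_Mt sub_Ms.
by subst k; apply: pattern_le_same_size_sym.
Qed.

Theorem proposition9 (m n : nat) (M : 'M[bool]_(m, n)) :
  quasi_perm M ->
  forall (p : nat) (t : 'S_p),
    minimal_containing M t <-> obtained_by_insertion M (permmx t).
Proof.
move=> _ p t; split; first exact: minimal_containing_insertion.
exact: insertion_minimal_containing.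
Qed.
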